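(* Let $n\ge2$ and consider Gram blocks of a fully symmetric solution: $P_1,\dots,P_n\in\mathbb{R}^{d\times p}$ with $P_i^TP_i=G^A$ for all $i$ and $P_i^TP_j=G^C$ for all $i\ne j$, and let $G^T=\frac1n(G^A+(n-1)G^C)$. Let $\xi_{\bar x},\xi_x\in\mathbb{R}^p$, $\bar x_i=P_i\xi_{\bar x}$ and $x_i=P_i\xi_x$. Then the constraints $\bar x_i=\frac1n\sum_{j=1}^nx_j$ for all $i=1,\dots,n$ are equivalent to $\xi_{\bar x}^TG^A\xi_{\bar x}+\xi_x^TG^T(\xi_x-2\xi_{\bar x})=0$.
   Context: This arises in performance estimation problems for distributed optimization, where a point common to all agents (here the agent average $\bar x=\frac1n\sum_jx_j$) is copied into each agent's variables as $\bar x_i$. *)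

From HB Require Import structures.
From mathcomp Require Import all_boot all_order all_algebra.
Set Implicit Arguments. Unset Strict Implicit. Unset Printing Implicit Defensive.
Import Order.TTheory GRing.Theory Num.Theory.
Local Open Scope ring_scope.

Definition GramT (R : realFieldType) (p n : nat) (GA GC : 'M[R]_p) : 'M[R]_p :=
  n%:R^-1 *: (GA + (n.-1)%:R *: GC).

(** Write [xbar = 1/n sum_j x_j].  Since [v^T v = 0] only for [v = 0], the
    constraint [P_i xi_xbar = xbar] holds iff [|P_i xi_xbar - xbar|^2 = 0].
    Expanding this square with [P_i^T P_i = G^A] and [P_i^T xbar = G^T xi_x]
    (true for every [i], as the [n - 1] cross blocks all equal [G^C]) gives
    the quadratic form of the statement, which does not depend on [i]. *)

From HB Require Import structures.
From mathcomp Require Import all_boot all_order all_algebra.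
Import Order.TTheory GRing.Theory Num.Theory.
Local Open Scope ring_scope.

Lemma trmx11 (R : pzSemiRingType) (M : 'M[R]_1) : M^T = M.
Proof. by rewrite [M]mx11_scalar tr_scalar_mx. Qed.

Lemma trmx_mulC (R : comPzRingType) d (u v : 'cV[R]_d) :
  u^T *m v = v^T *m u.
Proof. by rewrite -[LHS]trmx11 trmx_mul trmxK. Qed.

Lemma trmxB_mul_self (R : comPzRingType) d (u v : 'cV[R]_d) :
  (u - v)^T *m (u - v) = u^T *m u - (u^T *m v) *+ 2 + v^T *m v.
Proof.
rewrite [(u - v)^T]raddfB /= mulmxBl !mulmxBr (trmx_mulC _ _ v u).
by rewrite opprB mulr2n opprD !addrA addrAC.
Qed.

Lemma mul_trmx_self_eq0 (R : realDomainType) d (v : 'cV[R]_d) :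
  (v^T *m v == 0) = (v == 0).
Proof.
apply/idP/eqP => [/eqP vv0 | ->]; last by rewrite trmx0 mul0mx.
have sum_sq0 : \sum_(k < d) v k 0 ^+ 2 = 0.
  move/matrixP/(_ 0 0): vv0; rewrite !mxE => vv00.
  by rewrite -[RHS]vv00; apply: eq_bigr => k _; rewrite mxE expr2.
apply/matrixP => k j; rewrite ord1 mxE; apply/eqP.
by rewrite -sqrf_eq0 (psumr_eq0P (fun k _ => sqr_ge0 (v k 0)) sum_sq0).
Qed.

Section FullySymmetricGram.

Variables (R : realFieldType) (n d p : nat).
Variables (P : 'I_n -> 'M[R]_(d, p)) (GA GC : 'M[R]_p).
Hypothesis n_gt1 : (1 < n)%N.
Hypothesis hA : forall i, (P i)^T *m P i = GA.
Hypothesis hC : forall i j, i != j -> (P i)^T *m P j = GC.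

Set Implicit Arguments. Unset Strict Implicit.

Let GT := GramT n GA GC.
Let avg (xi : 'cV[R]_p) := n%:R^-1 *: \sum_(j < n) (P j *m xi).

Lemma gram_avg i xi : (P i)^T *m avg xi = GT *m xi.
Proof.
rewrite /avg /GT /GramT -scalemxAr -scalemxAl; congr (_ *: _).
rewrite mulmx_sumr (bigD1 i) //= mulmxA hA.
under eq_bigr => j ji do rewrite mulmxA hC 1?eq_sym //.
by rewrite sumr_const cardC1 card_ord mulmxDl -scalemxAl scaler_nat.
Qed.

Lemma avg_norm xi : (avg xi)^T *m avg xi = xi^T *m GT *m xi.
Proof.
have n_neq0 : n%:R != 0 :> R by rewrite pnatr_eq0 -lt0n ltnW.
have -> : (avg xi)^T = n%:R^-1 *: \sum_(j < n) (P j *m xi)^T.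
  by rewrite /avg linearZ /= raddf_sum.
rewrite -scalemxAl mulmx_suml.
under eq_bigr => j _ do rewrite trmx_mul -mulmxA gram_avg mulmxA.
by rewrite sumr_const card_ord -scaler_nat scalerA mulVf // scale1r.
Qed.

Lemma gramT_sym : GT^T = GT.
Proof.
pose i0 : 'I_n := Ordinal (ltnW n_gt1); pose i1 : 'I_n := Ordinal n_gt1.
have GA_sym : GA^T = GA by rewrite -(hA i0) trmx_mul trmxK.
have GC_sym : GC^T = GC.
  have i10 : i1 != i0 by [].
  by rewrite -(hC _ _ i10) trmx_mul trmxK !hC.
by rewrite /GT /GramT !linearZ /= linearD /= linearZ /= GA_sym GC_sym.
Qed.

Lemma residual_norm i xib xi :
  (P i *m xib - avg xi)^T *m (P i *m xib - avg xi) =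
  xib^T *m GA *m xib + xi^T *m GT *m (xi - 2%:R *: xib).
Proof.
have self_term : (P i *m xib)^T *m (P i *m xib) = xib^T *m GA *m xib.
  by rewrite trmx_mul mulmxA -(mulmxA _ (P i)^T) hA.
have cross_term : (P i *m xib)^T *m avg xi = xi^T *m GT *m xib.
  by rewrite trmx_mul -(mulmxA xib^T) gram_avg trmx_mulC trmx_mul gramT_sym.
rewrite trmxB_mul_self self_term cross_term avg_norm.
by rewrite mulmxBr -(scalemxAr 2%:R) (scaler_nat 2) addrAC addrA.
Qed.

End FullySymmetricGram.

Theorem proposition11 (R : realFieldType) (n d p : nat) (hn : (2 <= n)%N)
  (P : 'I_n -> 'M[R]_(d, p)) (GA GC : 'M[R]_p)
  (hA : forall i, (P i)^T *m P i = GA)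
  (hC : forall i j, i != j -> (P i)^T *m P j = GC)
  (xib xi : 'cV[R]_p) :
  (forall i : 'I_n, P i *m xib = n%:R^-1 *: \sum_(j < n) (P j *m xi))
  <->
  xib^T *m GA *m xib + xi^T *m GramT n GA GC *m (xi - 2%:R *: xib) = 0.
Proof.
have residual_eq0 i : (P i *m xib == n%:R^-1 *: \sum_(j < n) (P j *m xi)) =
    (xib^T *m GA *m xib + xi^T *m GramT n GA GC *m (xi - 2%:R *: xib) == 0).
  by rewrite -subr_eq0 -mul_trmx_self_eq0 (residual_norm hn hA hC).
split=> [consensus | form0 i].
- by apply/eqP; rewrite -(residual_eq0 (Ordinal hn)) consensus.
- by apply/eqP; rewrite residual_eq0 form0.
Qed.
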